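(* Let $\Psi$ be a $C^1$ two-time electron–photon wave function on the set $\mathscr{S}$ of space-like configurations satisfying the free multi-time equations $$-i\hbar D_{\mathrm{ph}}\Psi = 0,\qquad -i\hbar D_{\mathrm{el}}\Psi + m_{\mathrm{el}}\Psi = 0\quad\text{in }\mathscr{S},$$ and let $X$ be any constant vector field on $\mathbb{R}^{1,1}$. Then the tensor current $j_X^{\mu\nu}$ is jointly conserved in $\mathscr{S}$: $$\partial_{x_{\mathrm{ph}}^\mu} j_X^{\mu\nu} = 0 \ \ (\nu=0,1),\qquad \partial_{x_{\mathrm{el}}^\nu} j_X^{\mu\nu}=0\ \ (\mu=0,1).$$
   Context: Minkowski space $\mathbb{R}^{1,1}$ has metric $\eta=\mathrm{diag}(1,-1)$; indices are raised/lowered with $\eta$ and repeated indices summed. Let $\gamma^0=\begin{pmatrix}0&1\\1&0\end{pmatrix}$, $\gamma^1=\begin{pmatrix}0&-1\\1&0\end{pmatrix}$, so $\gamma^\mu\gamma^\nu+\gamma^\nu\gamma^\mu=2\eta^{\mu\nu}\mathbb{1}$, and for a vector $X$ put $\gamma(X)=\gamma_\mu X^\mu$. The configuration spacetime is $\mathcal{M}=\mathbb{R}^{1,1}_{\mathrm{ph}}\times\mathbb{R}^{1,1}_{\mathrm{el}}$ with points $(\mathbf{x}_{\mathrm{ph}},\mathbf{x}_{\mathrm{el}})$, and $\mathscr{S}=\{(\mathbf{x}_{\mathrm{ph}},\mathbf{x}_{\mathrm{el}}):\eta(\mathbf{x}_{\mathrm{ph}}-\mathbf{x}_{\mathrm{el}},\mathbf{x}_{\mathrm{ph}}-\mathbf{x}_{\mathrm{el}})<0\}$.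 Let $E_-=\begin{pmatrix}0&1\\0&0\end{pmatrix}$, $E_+=\begin{pmatrix}0&0\\1&0\end{pmatrix}$, $e_-=(1,0)^T$, $e_+=(0,1)^T$. A two-time wave function is $\Psi=\sum_{a,b\in\{-,+\}}\psi_{ab}(\mathbf{x}_{\mathrm{ph}},\mathbf{x}_{\mathrm{el}})\,E_a\otimes e_b$ with complex-valued components $\psi_{ab}$ (first factor: photon, an anti-diagonal $2\times2$ matrix; second factor: electron, a vector in $\mathbb{C}^2$). Set $\gamma^\mu_{\mathrm{ph}}=\gamma^\mu\otimes\mathbb{1}$ (acting on the photon matrix factor by left multiplication), $\gamma^\nu_{\mathrm{el}}=\mathbb{1}\otimes\gamma^\nu$, $D_{\mathrm{ph}}=\gamma^\mu_{\mathrm{ph}}\partial_{x^\mu_{\mathrm{ph}}}$, $D_{\mathrm{el}}=\gamma^\nu_{\mathrm{el}}\partial_{x^\nu_{\mathrm{el}}}$. The Dirac adjoint is $\overline{\Psi}=\sum_{a,b}\overline{\psi_{ab}}\,(\gamma^0E_a^\dagger\gamma^0)\otimes(e_b^\dagger\gamma^0)$. Products are taken factorwise ($(A\otimes r)(B\otimes c)=AB\otimes rc$, with $rc$ a scalar, and right multiplication by $\gamma_{\mathrm{ph}}(X)=\gamma(X)\otimes\mathbb{1}$ acting on the photon matrix factor), $\mathrm{tr}_{\mathrm{ph}}$ is the trace over the photon matrix factor, and $$j_X^{\mu\nu}=\tfrac14\,\mathrm{tr}_{\mathrm{ph}}\{\overline{\Psi}\,\gamma^\mu_{\mathrm{ph}}\gamma^\nu_{\mathrm{el}}\,\Psi\,\gamma_{\mathrm{ph}}(X)\}.$$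 *)

From Stdlib Require Import Reals.
From Coquelicot Require Import Coquelicot.

Local Open Scope C_scope.

(* Spinor/matrix indices 0,1 are encoded as false,true. *)
Definition Mat := bool -> bool -> C.
Definition Vec := bool -> C.

Definition mmul (A B : Mat) : Mat :=
  fun i j => A i false * B false j + A i true * B true j.
Definition madj (A : Mat) : Mat := fun i j => Cconj (A j i).
Definition mtr (A : Mat) : C := A false false + A true true.
Definition mscal (c : C) (A : Mat) : Mat := fun i j => c * A i j.
Definition madd (A B : Mat) : Mat := fun i j => A i j + B i j.

Definition gamma0 : Mat := fun i j => if Bool.eqb i j then 0 else 1.
Definition gamma1 : Mat :=
  fun i j => match i, j with false, true => RtoC (-1) | true, false => 1 | _, _ => 0 end.
Definition gamma (mu : bool) : Mat := if mu then gamma1 else gamma0.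

(* Minkowski metric diag(1,-1); gamma(X) = gamma_mu X^mu = gamma^0 X^0 - gamma^1 X^1 *)
Definition eta (mu : bool) : R := if mu then (-1)%R else 1%R.
Definition gammaX (X : bool -> R) : Mat :=
  madd (mscal (RtoC (eta false * X false)) (gamma false))
       (mscal (RtoC (eta true * X true)) (gamma true)).

Inductive pm := Minus | Plus.

Definition Emat (a : pm) : Mat := fun i j =>
  match a, i, j with
  | Minus, false, true => 1
  | Plus, true, false => 1
  | _, _, _ => 0 end.
Definition evec (b : pm) : Vec := fun k =>
  match b, k with Minus, false => 1 | Plus, true => 1 | _, _ => 0 end.

Definition sum_pm (f : pm -> C) : C := f Minus + f Plus.

(* Elements of (2x2 matrices) (x) C^2 : T i j k, (i,j) photon matrix entry,
   k electron component.  Elements of (2x2 matrices) (x) (row vectors)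
   are represented the same way (k = row entry). *)
Definition Tens := bool -> bool -> bool -> C.

Definition tens_of (c : pm -> pm -> C) : Tens := fun i j k =>
  sum_pm (fun a => sum_pm (fun b => c a b * Emat a i j * evec b k)).

(* Dirac adjoint: sum_{a,b} conj(c_ab) (gamma0 E_a^dag gamma0) (x) (e_b^dag gamma0) *)
Definition rowadj (v : Vec) : Vec := fun k =>
  Cconj (v false) * gamma0 false k + Cconj (v true) * gamma0 true k.
Definition bar_of (c : pm -> pm -> C) : Tens := fun i j k =>
  sum_pm (fun a => sum_pm (fun b =>
    Cconj (c a b) * mmul gamma0 (mmul (madj (Emat a)) gamma0) i j
      * rowadj (evec b) k)).

Definition act_ph (A : Mat) (T : Tens) : Tens := fun i j k =>
  A i false * T false j k + A i true * T true j k.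
Definition act_el (A : Mat) (T : Tens) : Tens := fun i j k =>
  A k false * T i j false + A k true * T i j true.
Definition ract_ph (T : Tens) (A : Mat) : Tens := fun i j k =>
  T i false k * A false j + T i true k * A true j.
(* factorwise product (A (x) r)(B (x) c) = AB (x) rc, extended bilinearly *)
Definition bar_mul (Bt T : Tens) : Mat := fun i j =>
  Bt i false false * T false j false + Bt i false true * T false j true
  + (Bt i true false * T true j false + Bt i true true * T true j true).

Definition tadd (S T : Tens) : Tens := fun i j k => S i j k + T i j k.
Definition tscal (c : C) (T : Tens) : Tens := fun i j k => c * T i j k.

(* configuration points ((x_ph^0, x_ph^1), (x_el^0, x_el^1)) *)
Definition Pt := ((R * R) * (R * R))%type.
Inductive particle := Ph | El.

Definition minkq (x : R * R) : R := (fst x * fst x - snd x * snd x)%R.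
Definition spacelike (p : Pt) : Prop :=
  (minkq (fst (fst p) - fst (snd p), snd (fst p) - snd (snd p)) < 0)%R.

Definition coord (p : Pt) (k : particle) (mu : bool) : R :=
  let x := match k with Ph => fst p | El => snd p end in
  if mu then snd x else fst x.
Definition upd (p : Pt) (k : particle) (mu : bool) (s : R) : Pt :=
  let set x := if mu then (fst x, s) else (s, snd x) in
  match k with Ph => (set (fst p), snd p) | El => (fst p, set (snd p)) end.

Definition has_partial (f : Pt -> C) (p : Pt) (k : particle) (mu : bool) (l : C)
  : Prop := is_derive (fun s => f (upd p k mu s)) (coord p k mu) l.

Definition C1_on (S : Pt -> Prop) (f : Pt -> C) : Prop :=
  exists D : particle -> bool -> Pt -> C,
    forall p, S p ->
      continuous f p /\
      forall k mu, has_partial f p k mu (D k mu p) /\ continuous (D k mu) p.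

(* Free multi-time equations at p, given the components psi and the
   values dpsi k mu a b of their partial derivatives d/dx^mu_k psi_ab at p. *)
Definition D_op (k : particle) (dpsi : particle -> bool -> pm -> pm -> C) : Tens :=
  let act := match k with Ph => act_ph | El => act_el end in
  tadd (act (gamma false) (tens_of (dpsi k false)))
       (act (gamma true) (tens_of (dpsi k true))).

Definition free_eqs (hbar m : R) (psi : pm -> pm -> C)
  (dpsi : particle -> bool -> pm -> pm -> C) : Prop :=
  (forall i j l, tscal (- Ci * RtoC hbar) (D_op Ph dpsi) i j l = 0) /\
  (forall i j l, tadd (tscal (- Ci * RtoC hbar) (D_op El dpsi))
                      (tscal (RtoC m) (tens_of psi)) i j l = 0).

(* j_X^{mu nu} = 1/4 tr_ph { Psibar gamma^mu_ph gamma^nu_el Psi gamma_ph(X) } *)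
Definition current (psi : pm -> pm -> Pt -> C) (X : bool -> R) (mu nu : bool)
  (p : Pt) : C :=
  let c := fun a b => psi a b p in
  RtoC (/ 4) * mtr (bar_mul (bar_of c)
      (act_ph (gamma mu) (act_el (gamma nu) (ract_ph (tens_of c) (gammaX X))))).

From Stdlib Require Import Reals Lra.
From Coquelicot Require Import Coquelicot.

(* After the Clifford traces are computed, the current is a diagonal real form in the
   lightcone components psi_ab:
     j_X^{mu nu} = 1/4 sum_{a,b} s_mu(a) s_nu(b) (X^0 - s_1(a) X^1) |psi_ab|^2,
   where s_0 = 1 and s_1(-) = 1, s_1(+) = -1.  In these components the free equations
   are transport equations along light rays,
     (d_0 + s_1(a) d_1) psi_ab = 0                          (photon),
     (d_0 + s_1(b) d_1) psi_ab = -i (m/hbar) psi_{a,-b}      (electron),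
   and each divergence is a weighted sum of Re(conj psi_ab (d_0 + s_1 d_1) psi_ab).
   For the photon every term vanishes; for the electron the two values of b combine to
   Re(-i (m/hbar) (conj psi_{a+} psi_{a-} + conj psi_{a-} psi_{a+})), the real part of
   an imaginary number. *)

Local Open Scope C_scope.

Ltac C_ring :=
  unfold Cplus, Cmult, Cconj, Copp, Cminus, RtoC, Ci;
  apply injective_projections; simpl; ring.

Lemma Cconj_RtoC (r : R) : Cconj (RtoC r) = RtoC r.
Proof. C_ring. Qed.

Lemma RtoC_N1 : RtoC (-1) = - 1.
Proof. C_ring. Qed.

Lemma Cconj_Ci : Cconj Ci = - Ci.
Proof. C_ring. Qed.

Lemma Cmult_eq_0_r (z w : C) : z <> 0 -> z * w = 0 -> w = 0.
Proof.
  intros Hz Hzw.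
  rewrite <- (Cmult_1_l w), <- (Cinv_l z Hz), <- Cmult_assoc, Hzw; ring.
Qed.

Lemma Ci_mult_RtoC_neq_0 (r : R) : r <> 0%R -> Ci * RtoC r <> 0.
Proof. intros Hr H; apply Hr; apply (f_equal Im) in H; simpl in H; lra. Qed.

Lemma is_derive_C (f : R -> C) (x : R) (l : C) :
  is_derive f x l <->
  is_derive (fun s => Re (f s)) x (Re l) /\ is_derive (fun s => Im (f s)) x (Im l).
Proof.
  split.
  - intros H; split; unfold is_derive in *; eapply filterdiff_ext_lin.
    + apply (filterdiff_comp' f (fun t : C_R_NormedModule => Re t) x _ (fun t => Re t) H).
      apply filterdiff_linear, (is_linear_fst (U := R_NormedModule) (V := R_NormedModule)).
    + reflexivity.
    + apply (filterdiff_comp' f (fun t : C_R_NormedModule => Im t) x _ (fun t => Im t) H).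
      apply filterdiff_linear, (is_linear_snd (U := R_NormedModule) (V := R_NormedModule)).
    + reflexivity.
  - intros [Hre Him]; unfold is_derive in *.
    assert (Hpair : is_linear (U := prod_NormedModule R_AbsRing R_NormedModule R_NormedModule)
                      (V := C_R_NormedModule) (fun t => (fst t, snd t) : C)).
    { split.
      - reflexivity.
      - reflexivity.
      - exists 1%R; split; [lra | intros t; rewrite Rmult_1_l; apply Rle_refl]. }
    assert (Hdiff : filterdiff (fun s => (Re (f s), Im (f s)) : C) (locally x)
                      (fun y => scal y l)).
    { eapply filterdiff_ext_lin.
      - apply (filterdiff_comp'_2 (K := R_AbsRing) (W := C_R_NormedModule)
                 (fun s => Re (f s)) (fun s => Im (f s)) (fun u v => (u, v) : C) x _ _
                 (fun u v => (u, v) : C) Hre Him).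
        apply filterdiff_linear, Hpair.
      - intros y; destruct l; reflexivity. }
    eapply filterdiff_ext; [| exact Hdiff].
    intros s; simpl; destruct (f s); reflexivity.
Qed.

Lemma is_derive_Cconst (c : C) (x : R) : is_derive (fun _ : R => c) x (RtoC 0).
Proof. apply (@is_derive_const _ C_R_NormedModule). Qed.

Lemma is_derive_Cplus (f g : R -> C) (x : R) (df dg : C) :
  is_derive f x df -> is_derive g x dg -> is_derive (fun s => f s + g s) x (df + dg).
Proof. apply (@is_derive_plus _ C_R_NormedModule). Qed.

Lemma is_derive_Cmult (f g : R -> C) (x : R) (df dg : C) :
  is_derive f x df -> is_derive g x dg ->
  is_derive (fun s => f s * g s) x (df * g x + f x * dg).
Proof.
  rewrite !is_derive_C; intros [Hf1 Hf2] [Hg1 Hg2].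
  pose proof (fun f g df dg (Hf : is_derive f x df) (Hg : is_derive g x dg) =>
                is_derive_mult f g x df dg Hf Hg Rmult_comm) as Hmult.
  split.
  - pose proof (is_derive_minus _ _ x _ _ (Hmult _ _ _ _ Hf1 Hg1) (Hmult _ _ _ _ Hf2 Hg2)) as H.
    match goal with |- is_derive _ _ ?l => match type of H with is_derive _ _ ?l' =>
      replace l with l'; [exact H | unfold minus, plus, opp, mult; simpl; unfold Re, Im; ring] end end.
  - pose proof (is_derive_plus _ _ x _ _ (Hmult _ _ _ _ Hf1 Hg2) (Hmult _ _ _ _ Hf2 Hg1)) as H.
    match goal with |- is_derive _ _ ?l => match type of H with is_derive _ _ ?l' =>
      replace l with l'; [exact H | unfold plus, mult, Re, Im; simpl; ring] end end.
Qed.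

Lemma is_derive_Cconj (f : R -> C) (x : R) (df : C) :
  is_derive f x df -> is_derive (fun s => Cconj (f s)) x (Cconj df).
Proof.
  rewrite !is_derive_C; intros [Hre Him]; split; simpl.
  - exact Hre.
  - apply (is_derive_opp (fun s => Im (f s))), Him.
Qed.

Lemma is_derive_Cscal (c : C) (f : R -> C) (x : R) (df : C) :
  is_derive f x df -> is_derive (fun s => c * f s) x (c * df).
Proof.
  intros Hf.
  replace (c * df) with (RtoC 0 * f x + c * df) by ring.
  apply is_derive_Cmult; [apply is_derive_Cconst | exact Hf].
Qed.

Lemma is_derive_sum_pm (f : R -> pm -> C) (x : R) (df : pm -> C) :
  (forall a, is_derive (fun s => f s a) x (df a)) ->
  is_derive (fun s => sum_pm (f s)) x (sum_pm df).
Proof. intros Hf; apply is_derive_Cplus; apply Hf. Qed.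

(* gamma^0 gamma^mu is diagonal in the basis e_-, e_+, with eigenvalue gamma_sign mu a on e_a. *)
Definition gamma_sign (mu : bool) (a : pm) : R :=
  if mu then match a with Minus => 1%R | Plus => (-1)%R end else 1%R.

Definition pm_flip (b : pm) : pm := match b with Minus => Plus | Plus => Minus end.

Definition jweight (X : bool -> R) (mu nu : bool) (a b : pm) : R :=
  gamma_sign mu a * gamma_sign nu b * (X false - gamma_sign true a * X true).

Definition jform (X : bool -> R) (mu nu : bool) (u v : pm -> pm -> C) : C :=
  RtoC (/ 4) * sum_pm (fun a => sum_pm (fun b =>
    RtoC (jweight X mu nu a b) * (Cconj (u a b) * v a b))).

Lemma jweight_mu1 (X : bool -> R) (nu : bool) (a b : pm) :
  jweight X true nu a b = (gamma_sign true a * jweight X false nu a b)%R.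
Proof. unfold jweight; simpl; ring. Qed.

Lemma jweight_nu1 (X : bool -> R) (mu : bool) (a b : pm) :
  jweight X mu true a b = (gamma_sign true b * jweight X mu false a b)%R.
Proof. unfold jweight; simpl; ring. Qed.

Lemma jweight_nu0_const (X : bool -> R) (mu : bool) (a b : pm) :
  jweight X mu false a b = jweight X mu false a Minus.
Proof. reflexivity. Qed.

Lemma current_jform (psi : pm -> pm -> Pt -> C) (X : bool -> R) (mu nu : bool) (p : Pt) :
  current psi X mu nu p = jform X mu nu (fun a b => psi a b p) (fun a b => psi a b p).
Proof.
  destruct mu, nu;
    cbv [current jform jweight gamma_sign mtr bar_mul bar_of act_ph act_el ract_ph tens_of
         gammaX gamma gamma0 gamma1 eta Emat evec sum_pm mmul madj madd mscal rowadj Bool.eqb];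
    rewrite ?Cconj_RtoC;
    repeat (rewrite RtoC_mult || rewrite RtoC_minus || rewrite RtoC_N1);
    ring.
Qed.

Lemma is_derive_jform (X : bool -> R) (mu nu : bool) (u v : R -> pm -> pm -> C)
    (du dv : pm -> pm -> C) (x : R) :
  (forall a b, is_derive (fun s => u s a b) x (du a b)) ->
  (forall a b, is_derive (fun s => v s a b) x (dv a b)) ->
  is_derive (fun s => jform X mu nu (u s) (v s)) x
    (jform X mu nu du (v x) + jform X mu nu (u x) dv).
Proof.
  intros Hu Hv.
  replace (jform X mu nu du (v x) + jform X mu nu (u x) dv)
    with (RtoC (/ 4) * sum_pm (fun a => sum_pm (fun b => RtoC (jweight X mu nu a b) *
            (Cconj (du a b) * v x a b + Cconj (u x a b) * dv a b))))
    by (unfold jform, sum_pm; ring).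
  apply is_derive_Cscal, is_derive_sum_pm; intros a.
  apply is_derive_sum_pm; intros b.
  apply is_derive_Cscal, is_derive_Cmult; [apply is_derive_Cconj|]; auto.
Qed.

Lemma upd_coord (p : Pt) (k : particle) (mu : bool) : upd p k mu (coord p k mu) = p.
Proof. destruct p as [[? ?] [? ?]], k, mu; reflexivity. Qed.

Lemma has_partial_current (psi : pm -> pm -> Pt -> C) (X : bool -> R) (mu nu : bool)
    (p : Pt) (k : particle) (rho : bool) (d : pm -> pm -> C) :
  (forall a b, has_partial (psi a b) p k rho (d a b)) ->
  has_partial (current psi X mu nu) p k rho
    (jform X mu nu d (fun a b => psi a b p) + jform X mu nu (fun a b => psi a b p) d).
Proof.
  intros Hd.
  pose proof (is_derive_jform X mu nu _ _ _ _ (coord p k rho) Hd Hd) as Hj.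
  cbv beta in Hj; rewrite upd_coord in Hj.
  eapply is_derive_ext; [intros s; symmetry; apply current_jform | exact Hj].
Qed.

Lemma free_eqs_Dirac (hbar m : R) (c : pm -> pm -> C)
    (dpsi : particle -> bool -> pm -> pm -> C) :
  (0 < hbar)%R -> free_eqs hbar m c dpsi ->
  (forall i j l, D_op Ph dpsi i j l = 0) /\
  (forall i j l, D_op El dpsi i j l + Ci * RtoC (m / hbar)%R * tens_of c i j l = 0).
Proof.
  intros Hh [Hph Hel].
  assert (Hz : - Ci * RtoC hbar <> 0).
  { replace (- Ci * RtoC hbar) with (Ci * RtoC (- hbar)) by C_ring.
    apply Ci_mult_RtoC_neq_0; lra. }
  split; intros i j l.
  - exact (Cmult_eq_0_r _ _ Hz (Hph i j l)).
  - apply (Cmult_eq_0_r _ _ Hz).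
    rewrite <- (Hel i j l); cbv [tadd tscal].
    replace (RtoC m) with (RtoC hbar * RtoC (m / hbar))
      by (rewrite <- RtoC_mult; f_equal; field; lra).
    generalize (D_op El dpsi i j l) (tens_of c i j l) (m / hbar)%R; intros D T k.
    C_ring.
Qed.

Lemma free_ph_lightcone (hbar m : R) (c : pm -> pm -> C)
    (dpsi : particle -> bool -> pm -> pm -> C) :
  (0 < hbar)%R -> free_eqs hbar m c dpsi ->
  forall a b, dpsi Ph false a b + RtoC (gamma_sign true a) * dpsi Ph true a b = 0.
Proof.
  intros Hh Hfree a b.
  destruct (free_eqs_Dirac hbar m c dpsi Hh Hfree) as [Hph _].
  (* psi_ab enters D_ph Psi only through the entry i = j = [a = -], k = [b = +]. *)
  destruct a, b;
    [ rewrite <- (Hph true true false) | rewrite <- (Hph true true true)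
    | rewrite <- (Hph false false false) | rewrite <- (Hph false false true) ];
    cbv [D_op tadd tens_of act_ph gamma gamma0 gamma1 gamma_sign Emat evec sum_pm Bool.eqb];
    rewrite ?RtoC_N1; ring.
Qed.

Lemma free_el_lightcone (hbar m : R) (c : pm -> pm -> C)
    (dpsi : particle -> bool -> pm -> pm -> C) :
  (0 < hbar)%R -> free_eqs hbar m c dpsi ->
  forall a b, dpsi El false a b + RtoC (gamma_sign true b) * dpsi El true a b
              = - Ci * RtoC (m / hbar) * c a (pm_flip b).
Proof.
  intros Hh Hfree a b.
  destruct (free_eqs_Dirac hbar m c dpsi Hh Hfree) as [_ Hel].
  apply Ceq_minus.
  (* psi_ab enters D_el Psi only through the entry (i, j) = position of E_a, k = [b = -]. *)
  destruct a, b;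
    [ rewrite <- (Hel false true true) | rewrite <- (Hel false true false)
    | rewrite <- (Hel true false true) | rewrite <- (Hel true false false) ];
    cbv [D_op tadd tens_of act_el gamma gamma0 gamma1 gamma_sign pm_flip Emat evec sum_pm Bool.eqb];
    rewrite ?RtoC_N1; ring.
Qed.

Lemma jform_divergence_ph (X : bool -> R) (nu : bool) (c d0 d1 : pm -> pm -> C) :
  (forall a b, d0 a b + RtoC (gamma_sign true a) * d1 a b = 0) ->
  jform X false nu d0 c + jform X false nu c d0
  + (jform X true nu d1 c + jform X true nu c d1) = 0.
Proof.
  intros Hlc.
  assert (Hd0 : forall a b, d0 a b = - (RtoC (gamma_sign true a) * d1 a b))
    by (intros a b; apply Ceq_minus; rewrite <- (Hlc a b); ring).
  cbv [jform sum_pm].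
  rewrite !Hd0, !jweight_mu1, ?Copp_conj, ?Cmult_conj, ?Cconj_RtoC, ?RtoC_mult.
  ring.
Qed.

Lemma jform_divergence_el (X : bool -> R) (mu : bool) (k : R) (c d0 d1 : pm -> pm -> C) :
  (forall a b, d0 a b + RtoC (gamma_sign true b) * d1 a b = - Ci * RtoC k * c a (pm_flip b)) ->
  jform X mu false d0 c + jform X mu false c d0
  + (jform X mu true d1 c + jform X mu true c d1) = 0.
Proof.
  intros Hlc.
  assert (Hd0 : forall a b, d0 a b
                  = - Ci * RtoC k * c a (pm_flip b) - RtoC (gamma_sign true b) * d1 a b)
    by (intros a b; rewrite <- (Hlc a b); ring).
  cbv [jform sum_pm].
  rewrite !Hd0, !jweight_nu1, ?Cminus_conj, ?Cmult_conj, ?Copp_conj, ?Cconj_RtoC,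
    ?RtoC_mult, Cconj_Ci.
  rewrite !(jweight_nu0_const X mu _ Plus); cbv [pm_flip]; ring.
Qed.

Lemma C1_on_partials (S : Pt -> Prop) (psi : pm -> pm -> Pt -> C) (p : Pt) :
  (forall a b, C1_on S (psi a b)) -> S p ->
  exists dpsi : particle -> bool -> pm -> pm -> C,
    forall k mu a b, has_partial (psi a b) p k mu (dpsi k mu a b).
Proof.
  intros HC1 Hp.
  destruct (HC1 Minus Minus) as [Dmm Hmm], (HC1 Minus Plus) as [Dmp Hmp],
           (HC1 Plus Minus) as [Dpm Hpm], (HC1 Plus Plus) as [Dpp Hpp].
  exists (fun k mu a b => match a, b with
                        | Minus, Minus => Dmm k mu p | Minus, Plus => Dmp k mu p
                        | Plus, Minus => Dpm k mu p | Plus, Plus => Dpp k mu p end).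
  intros k mu [|] [|];
    [ apply (Hmm p Hp) | apply (Hmp p Hp) | apply (Hpm p Hp) | apply (Hpp p Hp) ].
Qed.

Theorem proposition1
  (hbar m_el : R) (hhbar : (0 < hbar)%R) (hm : (0 < m_el)%R)
  (psi : pm -> pm -> Pt -> C)
  (hC1 : forall a b, C1_on spacelike (psi a b))
  (heq : forall p, spacelike p ->
     forall dpsi : particle -> bool -> pm -> pm -> C,
       (forall k mu a b, has_partial (psi a b) p k mu (dpsi k mu a b)) ->
       free_eqs hbar m_el (fun a b => psi a b p) dpsi)
  (X : bool -> R) :
  forall p, spacelike p ->
    (forall nu, exists l0 l1 : C,
        has_partial (fun q => current psi X false nu q) p Ph false l0 /\
        has_partial (fun q => current psi X true nu q) p Ph true l1 /\
        (l0 + l1)%C = 0%C) /\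
    (forall mu, exists l0 l1 : C,
        has_partial (fun q => current psi X mu false q) p El false l0 /\
        has_partial (fun q => current psi X mu true q) p El true l1 /\
        (l0 + l1)%C = 0%C).
Proof.
  intros p Hp.
  destruct (C1_on_partials spacelike psi p hC1 Hp) as [dpsi Hd].
  pose proof (heq p Hp dpsi Hd) as Hfree.
  set (c := fun a b => psi a b p).
  split.
  - intros nu.
    eexists; eexists; split; [| split];
      [ apply has_partial_current; intros; apply Hd
      | apply has_partial_current; intros; apply Hd
      | apply jform_divergence_ph, (free_ph_lightcone hbar m_el c dpsi hhbar Hfree) ].
  - intros mu.
    eexists; eexists; split; [| split];
      [ apply has_partial_current; intros; apply Hd
      | apply has_partial_current; intros; apply Hd
      | apply (jform_divergence_el X mu (m_el / hbar)),
              (free_el_lightcone hbar m_el c dpsi hhbar Hfree) ].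
Qed.
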